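(* Let $d\ge1$ and $n>2$ be integers. Then $\mathcal U(H(d,n))$ is the groupoid with one object $\ast$ and only the identity morphism $\mathrm{id}_\ast$, and $\varpi(H(d,n))$ is the trivial morphism-colored functor (sending every object to $\ast$, every morphism to $\mathrm{id}_\ast$, every color $a\in\{0,\dots,d\}$ to $\mathrm{id}_\ast$). Consequently, for every category $\mathcal C$, every morphism-colored functor from $H(d,n)$ to the discrete morphism-colored category $(\mathcal C,\mathrm{id})$ factors (uniquely) through this trivial morphism-colored functor; and for all integers $d,d'\ge1$ and $n,n'>2$ there is a one-to-one correspondence between morphism-colored functors $H(d,n)\to(\mathcal C,\mathrm{id})$ and morphism-colored functors $H(d',n')\to(\mathcal C,\mathrm{id})$.
   Context: A morphism-colored category is a pair $(\mathcal C,\lambda)$ where $\mathcal C$ is a category and $\lambda$ assigns to each morphism $f$ a color $\lambda(f)$, such that whenever $\lambda(g)=\lambda(f_1\circ f_2)$ there exist composable $g_1,g_2$ with $g=g_1\circ g_2$, $\lambda(g_i)=\lambda(f_i)$. $(\mathcal C,\mathrm{id})$ (each morphism colored by itself) is the discrete morphism-colored category. A morphism-colored functor $(F,\gamma):(\mathcal C,\lambda)\to(\mathcal C',\lambda')$ is a functor $F$ with a map $\gamma$ on colors such that $\gamma(\lambda(f))=\lambda'(F(f))$ for all morphisms $f$; composition is componentwise. For a small morphism-colored groupoid $(\mathcal G,\lambda)$ with $\lambda(f)=\lambda(g)\Rightarrow\lambda(f^{-1})=\lambda(g^{-1})$: $I_1=\lambda(\mathrm{Mor}\,\mathcal G)$,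 $\lambda_1$ the corestriction; $I_0=\{\lambda(\mathrm{id}_x)\}$, $\lambda_0(x)=\lambda(\mathrm{id}_x)$; $\overset{1}{\sim}$ on $I_1$ relates $\lambda(f_1\circ\cdots\circ f_l)$ and $\lambda(g_1\circ\cdots\circ g_l)$ for composable sequences with $\lambda(f_i)=\lambda(g_i)$ for all $i$ (an equivalence relation), with quotient $s_1:I_1\to\bar I_1$; $\overset{0}{\sim}$ on $I_0$ relates $\lambda_0(\mathrm{source} f)$, $\lambda_0(\mathrm{source} g)$ whenever $s_1\lambda_1(f)=s_1\lambda_1(g)$, with quotient $s_0:I_0\to\bar I_0$. $\mathcal U(\mathcal G,\lambda)$ is the groupoid with objects $\bar I_0$, morphisms $\bar I_1$, source/target of $s_1\lambda_1(f)$ being $s_0\lambda_0$ of source/target of $f$, composition $s_1\lambda_1(f)\circ s_1\lambda_1(g)=s_1\lambda_1(f\circ g)$; $\bar\lambda:\mathcal G\to\mathcal U(\mathcal G,\lambda)$ is $x\mapsto s_0\lambda_0(x)$, $f\mapsto s_1\lambda_1(f)$, and $\varpi(\mathcal G,\lambda)=(\bar\lambda,s_1)$. Hamming schemoid: let $G=(\mathbb Z/n\mathbb Z)^d$ and $w(x)=\#\{i:x_i\neq0\}$ the Hamming weight. $G/\!/G$ is the action groupoid: objects $G$, morphisms $G\times G$, where $(g,x)$ has source $x$ and target $g+x$, composition $(h,g+x)\circ(g,x)=(h+g,x)$, identity $\mathrm{id}_x=(0,x)$, inverse $(g,x)^{-1}=(-g,g+x)$. Let $\pi(g,x)=g$.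 Then $H(d,n)=(G/\!/G,\,w\circ\pi)$, a morphism-colored groupoid with colors in $\{0,\dots,d\}$ satisfying $w\circ\pi(f)=w\circ\pi(g)\Rightarrow w\circ\pi(f^{-1})=w\circ\pi(g^{-1})$. *)

From HB Require Import structures.
From mathcomp Require Import all_boot all_order all_algebra.
Set Implicit Arguments. Unset Strict Implicit. Unset Printing Implicit Defensive.
Import GRing.Theory.
Local Open Scope ring_scope.

Record Category := {
  Obj :> Type;
  Hom : Obj -> Obj -> Type;
  cid : forall a, Hom a a;
  ccomp : forall x y z, Hom y z -> Hom x y -> Hom x z;
  ccomp_id_l : forall a b (f : Hom a b), ccomp (cid b) f = f;
  ccomp_id_r : forall a b (f : Hom a b), ccomp f (cid a) = f;
  ccomp_assoc : forall a b c e (h : Hom c e) (g : Hom b c) (f : Hom a b),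
      ccomp h (ccomp g f) = ccomp (ccomp h g) f
}.
Arguments cid {_} _.
Arguments ccomp {_ _ _ _} _ _.

(* Colors of the discrete morphism-colored category (C, id): the morphisms of C,
   packaged with their source and target. *)
Definition Arr (C : Category) : Type := {a : C & {b : C & Hom a b}}.
Definition arr (C : Category) (a b : C) (f : Hom a b) : Arr C :=
  existT _ a (existT _ b f).

(* G = (Z/nZ)^d as row vectors (used only with n > 2). *)
Definition HG (d n : nat) := 'rV['Z_n]_d.
(* morphism (g, x) of the action groupoid G//G: source x, target g + x *)
Definition HMor (d n : nat) := (HG d n * HG d n)%type.
Definition hsrc d n (f : HMor d n) : HG d n := f.2.
Definition htgt d n (f : HMor d n) : HG d n := f.1 + f.2.
Definition hid d n (x : HG d n) : HMor d n := (0, x).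
(* composition h o f, meaningful when hsrc h = htgt f *)
Definition hcomp d n (h f : HMor d n) : HMor d n := (h.1 + f.1, f.2).

Definition hweight d n (v : HG d n) : nat := #|[set i : 'I_d | v ord0 i != 0]|.
Definition hcol d n (f : HMor d n) : 'I_d.+1 := inord (hweight f.1).

Definition I1 d n : {set 'I_d.+1} := [set hcol f | f : HMor d n].
Definition I0 d n : {set 'I_d.+1} := [set hcol (hid x) | x : HG d n].

(* [:: f1; ...; fl] is composable: source f_i = target f_(i+1) *)
Definition hlink d n (f g : HMor d n) : bool := hsrc f == htgt g.
Fixpoint hcompseq d n (f : HMor d n) (fs : seq (HMor d n)) : HMor d n :=
  match fs with
  | [::] => f
  | g :: gs => hcomp f (hcompseq g gs)
  end.

Definition rel1 d n (a b : 'I_d.+1) : Prop :=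
  exists (f : HMor d n) fs g gs,
    [/\ sorted (@hlink d n) (f :: fs), sorted (@hlink d n) (g :: gs),
        map (@hcol d n) (f :: fs) = map (@hcol d n) (g :: gs),
        hcol (hcompseq f fs) = a & hcol (hcompseq g gs) = b].
Arguments rel1 : clear implicits.

Definition rel0 d n (a b : 'I_d.+1) : Prop :=
  exists f g : HMor d n,
    [/\ rel1 d n (hcol f) (hcol g), hcol (hid (hsrc f)) = a & hcol (hid (hsrc g)) = b].
Arguments rel0 : clear implicits.
Arguments I0 : clear implicits.
Arguments I1 : clear implicits.

Record MCFun (d n : nat) (C : Category) := {
  Fo : HG d n -> C;
  Fm : forall f : HMor d n, Hom (Fo (hsrc f)) (Fo (htgt f));
  gam : 'I_d.+1 -> Arr C;
  Fm_id : forall x, arr (Fm (hid x)) = arr (cid (Fo x));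
  (* composition of (k, g + x) after (g, x); these are all composable pairs *)
  Fm_comp : forall k g x : HG d n,
      arr (Fm (hcomp (k, g + x) (g, x))) = arr (ccomp (Fm (k, g + x)) (Fm (g, x)));
  gam_col : forall f, gam (hcol f) = arr (Fm f)
}.

(* The coloring only remembers Hamming weights, and when 2 <> 0 in Z/nZ the
   weights can be recombined freely.  Writing x for the indicator of the first
   a coordinates, the vectors x and -x have the same weight a, so a
   morphism-colored functor F sends (x, x) and (-x, x) to the same arrow;
   composing with (x, 0) then gives F(2x, 0) = F(0, 0) = id, and 2x again has
   weight a.  Likewise 2x - 1 has full weight d for every a, so the two-step
   chains (2x - 1, 1) o (1, 0), whose composite 2x has weight a, all carry the
   same colors: any two colors are ~1-related, and ~0 is total since every
   identity has color 0. *)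
From Pilot Require Import Defs.
From HB Require Import structures.
From mathcomp Require Import all_boot all_order all_algebra.
From Stdlib Require Import Eqdep FunctionalExtensionality ProofIrrelevance.
Set Implicit Arguments. Unset Strict Implicit. Unset Printing Implicit Defensive.
Import GRing.Theory.
Local Open Scope ring_scope.

Lemma Zp_two_neq0 n : (2 < n)%N -> (2%:R : 'Z_n) != 0.
Proof. by case: n => [|[|[|p]]]. Qed.

Section HammingWeight.

Variables d n : nat.

Lemma hweight_prefix (v : HG d n) (m : nat) : (m <= d)%N ->
  (forall i : 'I_d, (v ord0 i != 0) = (i < m)%N) -> hweight v = m.
Proof.
move=> le_md supp_v; rewrite /hweight.
have -> : [set i : 'I_d | v ord0 i != 0] = widen_ord le_md @: 'I_m.
  apply/setP => i; rewrite inE supp_v; apply/idP/imsetP => [lt_im | [j _ ->]].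
    by exists (Ordinal lt_im); last exact: val_inj.
  exact: (ltn_ord j).
rewrite card_imset ?cardE ?size_enum_ord // => j k /(congr1 val) eq_jk.
exact: val_inj.
Qed.

Lemma hcolE (f : HMor d n) (k : 'I_d.+1) :
  (forall i : 'I_d, (f.1 ord0 i != 0) = (i < k)%N) -> hcol f = k.
Proof.
by move=> supp_f; rewrite /hcol (hweight_prefix (ltn_ord k)) ?inord_val.
Qed.

Lemma hcol0 (x : HG d n) : hcol (0, x) = ord0.
Proof. by apply: hcolE => i; rewrite mxE eqxx. Qed.

Definition hind (m : nat) : HG d n := \row_(i < d) (i < m)%:R.

Lemma hcol_hind (a : 'I_d.+1) (x : HG d n) : hcol (hind a, x) = a.
Proof. by apply: hcolE => i; rewrite mxE; case: (i < a)%N; rewrite ?oner_eq0 ?eqxx. Qed.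

Lemma hcol_opp_hind (a : 'I_d.+1) (x : HG d n) : hcol (- hind a, x) = a.
Proof.
by apply: hcolE => i; rewrite !mxE oppr_eq0; case: (i < a)%N; rewrite ?oner_eq0 ?eqxx.
Qed.

Hypothesis n_gt2 : (2 < n)%N.

Lemma hcol_double_hind (a : 'I_d.+1) (x : HG d n) : hcol (hind a *+ 2, x) = a.
Proof.
apply: hcolE => i; rewrite !mxE.
by case: (i < a)%N; rewrite ?mulr0n ?eqxx // -mulr_natr mul1r Zp_two_neq0.
Qed.

Lemma hcol_full (a : 'I_d.+1) (x : HG d n) : hcol (hind a *+ 2 - hind d, x) = ord_max.
Proof.
apply: hcolE => i; rewrite !mxE ltn_ord /=.
case: (i < a)%N; first by rewrite addrK oner_eq0.
by rewrite addr0 sub0r oppr_eq0 oner_eq0.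
Qed.

End HammingWeight.

Section Collapse.

Variables d n : nat.
Hypothesis n_gt2 : (2 < n)%N.

Lemma I0_Hamming : I0 d n = [set ord0].
Proof.
apply/setP => a; rewrite inE; apply/imsetP/eqP => [[x _ ->] | ->]; first exact: hcol0.
by exists 0; rewrite ?hcol0.
Qed.

Lemma I1_Hamming : I1 d n = [set: 'I_d.+1].
Proof. by apply/setP => a; rewrite inE; apply/imsetP; exists (hind d n a, 0); rewrite ?hcol_hind. Qed.

Lemma rel1_Hamming (a b : 'I_d.+1) : rel1 d n a b.
Proof.
pose chain (c : 'I_d.+1) : HMor d n := (hind d n c *+ 2 - hind d n d, hind d n d).
pose base : HMor d n := (hind d n d, 0).
have linked c : sorted (@hlink d n) [:: chain c; base].
  by rewrite /= /hlink /hsrc /htgt /= addr0 eqxx.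
have composite c : hcol (hcompseq (chain c) [:: base]) = c.
  by rewrite /= /hcomp /= subrK hcol_double_hind.
exists (chain a), [:: base], (chain b), [:: base].
by split; rewrite ?linked ?composite //= !hcol_full.
Qed.

Lemma rel0_Hamming (a b : 'I_d.+1) : a \in I0 d n -> b \in I0 d n -> rel0 d n a b.
Proof.
rewrite I0_Hamming !inE => /eqP -> /eqP ->.
by exists (hid 0), (hid 0); split; rewrite ?hcol0 //; exact: rel1_Hamming.
Qed.

End Collapse.

Section MCFunTrivial.

Variable C : Category.

Lemma arr_inj (a b : C) (f g : Defs.Hom a b) : arr f = arr g -> f = g.
Proof.
rewrite /arr => /(EqdepTheory.inj_pair2 _ _ _ _ _) eq_fg.
exact: EqdepTheory.inj_pair2 _ _ _ _ _ eq_fg.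
Qed.

Lemma arr_ccompr (a b b' x : C) (g : Defs.Hom a b) (g' : Defs.Hom a b')
    (f : Defs.Hom x a) :
  arr g = arr g' -> arr (ccomp g f) = arr (ccomp g' f).
Proof.
rewrite /arr => /(EqdepTheory.inj_pair2 _ _ _ _ _) eq_g.
exact: (congr1 (fun u => arr (ccomp (projT2 u) f)) eq_g).
Qed.

Variables d n : nat.
Hypothesis n_gt2 : (2 < n)%N.
Variable F : MCFun d n C.

Lemma gam_col0 (x : HG d n) : gam F ord0 = arr (cid (Fo F x)).
Proof. by rewrite -(hcol0 x) gam_col Fm_id. Qed.

Lemma Fo_const (x : HG d n) : Fo F x = Fo F 0.
Proof. by have := gam_col0 x; rewrite (gam_col0 0) => /(congr1 (@projT1 _ _)). Qed.

Lemma gam_trivial (a : 'I_d.+1) : gam F a = arr (cid (Fo F 0)).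
Proof.
set x := hind d n a.
have same_arrow : arr (Fm F (x, x + 0)) = arr (Fm F (- x, x + 0)).
  by rewrite -!gam_col hcol_hind ?hcol_opp_hind.
rewrite -(hcol_double_hind n_gt2 a 0) -/x mulr2n -[(_, _)]/(hcomp (x, x + 0) (x, 0)).
rewrite gam_col Fm_comp (arr_ccompr _ same_arrow) -Fm_comp -gam_col.
by rewrite /hcomp /= addNr hcol0 (gam_col0 0).
Qed.

Lemma Fm_trivial (f : HMor d n) : arr (Fm F f) = arr (cid (Fo F 0)).
Proof. by rewrite -gam_col gam_trivial. Qed.

End MCFunTrivial.

Definition const_MCFun d n (C : Category) (c : C) : MCFun d n C.
Proof.
refine (@Build_MCFun d n C (fun _ => c) (fun _ => cid c) (fun _ => arr (cid c)) _ _ _) => //.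
by move=> *; rewrite ccomp_id_l.
Defined.

Lemma MCFun_constE d n (C : Category) (F : MCFun d n C) :
  (2 < n)%N -> F = const_MCFun d n (Fo F 0).
Proof.
move=> n_gt2; have := Fo_const F; have := Fm_trivial n_gt2 F; have := gam_trivial n_gt2 F.
case: F => Fo Fm gam Fm_id Fm_comp gam_col /=.
move: (Fo 0) => c gamE FmE FoE.
have eFo : Fo = fun=> c by apply: functional_extensionality.
subst Fo; have eFm : Fm = fun=> cid c.
  by apply: functional_extensionality_dep => f; exact: arr_inj.
have eGam : gam = fun=> arr (cid c) by apply: functional_extensionality.
by subst Fm gam; congr Build_MCFun; apply: proof_irrelevance.
Qed.

Theorem mainTheorem10 (d n : nat) (hd : (1 <= d)%N) (hn : (2 < n)%N) :
  (* U(H(d,n)) has a single object and a single (identity) morphism *)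
  [/\ I0 d n = [set ord0], I1 d n = [set: 'I_d.+1],
      (forall a b, a \in I0 d n -> b \in I0 d n -> rel0 d n a b) &
      (forall a b, a \in I1 d n -> b \in I1 d n -> rel1 d n a b)]
  /\
  (* every morphism-colored functor to (C, id) factors uniquely through the
     trivial one: the factor U(H(d,n)) -> (C,id) is determined by an object c *)
  (forall (C : Category) (F : MCFun d n C),
     exists c : C,
       ((forall x, Fo F x = c) /\ (forall f, arr (Fm F f) = arr (cid c)) /\
        (forall a, gam F a = arr (cid c)))
       /\ forall c' : C,
         ((forall x, Fo F x = c') /\ (forall f, arr (Fm F f) = arr (cid c')) /\
          (forall a, gam F a = arr (cid c'))) -> c' = c)
  /\
  (* one-to-one correspondence between functors from H(d,n) and from H(d',n') *)
  (forall (d' n' : nat), (1 <= d')%N -> (2 < n')%N -> forall C : Category,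
     exists (phi : MCFun d n C -> MCFun d' n' C) (psi : MCFun d' n' C -> MCFun d n C),
       cancel phi psi /\ cancel psi phi).
Proof.
split.
  split; [exact: I0_Hamming | exact: I1_Hamming | exact: rel0_Hamming |].
  by move=> a b _ _; exact: rel1_Hamming.
split=> [C F | d' n' _ hn' C].
  exists (Fo F 0); split; last by move=> c' [FoE _]; rewrite -(FoE 0).
  by split; [exact: Fo_const | split; [exact: Fm_trivial | exact: gam_trivial]].
exists (fun F => const_MCFun d' n' (Fo F 0)), (fun G => const_MCFun d n (Fo G 0)).
by split=> F; rewrite [RHS](MCFun_constE F).
Qed.
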